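(* Let $\mathsf{CS}$ be a constant specification for $\mathsf{J4C}^+$. For every set of formulas $T$ and formula $\phi$: if $T\models_{\mathsf{J4C}^+_{\mathsf{CS}}}\phi$, then $T\vdash_{\mathsf{J4C}^+_{\mathsf{CS}}}\phi$.
   Context: Language: countable sets $\mathsf{Const}$, $\mathsf{Var}$, $\mathsf{Prop}$; terms $t ::= c \mid x \mid t\cdot t \mid t+t \mid\ !t$; formulas $\phi ::= p \mid \neg\phi \mid \phi\wedge\phi \mid \phi\supset\phi \mid \phi>\phi \mid t{:}\phi$; $\mathsf{Tm},\mathsf{Fm}$ the sets of terms and formulas. Axiom schemes of $\mathsf{J4C}^+$: (A1) all instances of classical tautologies; (A2) $(\phi>(\psi\supset\chi))\supset((\phi>\psi)\supset(\phi>\chi))$; (A3) $\phi>\phi$; (A4) $(\phi>\psi)\supset(\phi\supset\psi)$; (A5) $(s{:}(\phi>\psi)\wedge t{:}\phi) > (s\cdot t){:}\psi$; (A6) $s{:}\phi > (s+t){:}\phi$; (A7) $t{:}\phi>(s+t){:}\phi$; (A9) $t{:}\phi > (!t){:}t{:}\phi$ (there is no scheme $t{:}\phi>\phi$). A constant specification $\mathsf{CS}$ is a set of $c{:}\phi$ with $c\in\mathsf{Const}$, $\phi$ an instance of these schemes. $\mathsf{J4C}^+_{\mathsf{CS}}$: these axioms and $\mathsf{CS}$; rules (MP) from $\phi,\phi\supset\psi$ infer $\psi$, and (RCN) from $\psi$ infer $\phi>\psi$. $T\vdash\phi$ iff $\vdash(\psi_1\wedge\cdots\wedge\psi_n)\supset\phi$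 for some $\psi_1,\dots,\psi_n\in T$, $n\ge0$. Relational models $\mathcal M=(W,W_N,R_{Fm},R_{Tm},V)$: $W$ nonempty, $W_N\subseteq W$ nonempty (normal states); $R_\phi\subseteq W_N\times W_N$ for each formula; $R_t\subseteq W\times W$ for each term; $V(w)\subseteq\mathsf{Prop}$ for $w\in W_N$, $V(w)\subseteq\mathsf{Fm}$ for $w\in W\setminus W_N$. Truth: at non-normal $w$, $w\models\phi$ iff $\phi\in V(w)$; at normal $w$: $p$ iff $p\in V(w)$, $\neg,\wedge,\supset$ classical, $\phi>\psi$ iff $R_\phi(w)\subseteq[\psi]$, $t{:}\phi$ iff $R_t(w)\subseteq[\phi]$, with $[\phi]=\{w\in W:w\models\phi\}$. A $\mathsf{J4C}^+_{\mathsf{CS}}$-model is a relational model such that for all $w\in W_N$: (1) $R_\phi(w)\subseteq[\phi]$; (2) if $w\in[\phi]$ then $w\in R_\phi(w)$; (3) $R_c(w)\subseteq[\phi]$ for each $c{:}\phi\in\mathsf{CS}$; (4) $R_{s+t}(w)\subseteq R_s(w)\cap R_t(w)$; (5) for all $v\in R_{s\cdot t}(w)$, all $\phi,\psi$: if $w\in[s{:}(\phi>\psi)\wedge t{:}\phi]$ then $v\in[\psi]$; (7) for all $t$ and $v,u\in W$, if $wR_{!t}v$ and $vR_tu$ then $wR_tu$ (no reflexivity requirement on $R_t$). $T\models_{\mathsf{J4C}^+_{\mathsf{CS}}}\phi$ iff for every such model and every $w\in W_N$ at which all members of $T$ are true, $\phi$ is true at $w$. *)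

From Stdlib Require Import List Bool.
Import ListNotations.

(* Const, Var, Prop are each taken to be nat (countable sets). *)
Inductive tm : Type :=
| TC   : nat -> tm
| TV   : nat -> tm
| TApp : tm -> tm -> tm
| TSum : tm -> tm -> tm
| TBang : tm -> tm.

Inductive fm : Type :=
| FP    : nat -> fm
| FNeg  : fm -> fm
| FAnd  : fm -> fm -> fm
| FImp  : fm -> fm -> fm
| FCond : fm -> fm -> fm
| FJ    : tm -> fm -> fm.

(* Classical tautology instances: true under every boolean assignment to the
   propositionally atomic subformulas (letters, conditionals, justification
   formulas). *)
Fixpoint beval (v : fm -> bool) (f : fm) : bool :=
  match f with
  | FNeg g => negb (beval v g)
  | FAnd g h => beval v g && beval v h
  | FImp g h => implb (beval v g) (beval v h)
  | _ => v f
  end.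

Definition tautology (f : fm) : Prop := forall v : fm -> bool, beval v f = true.

Inductive IsAxiom : fm -> Prop :=
| A1 : forall f, tautology f -> IsAxiom f
| A2 : forall f g h,
    IsAxiom (FImp (FCond f (FImp g h)) (FImp (FCond f g) (FCond f h)))
| A3 : forall f, IsAxiom (FCond f f)
| A4 : forall f g, IsAxiom (FImp (FCond f g) (FImp f g))
| A5 : forall s t f g,
    IsAxiom (FCond (FAnd (FJ s (FCond f g)) (FJ t f)) (FJ (TApp s t) g))
| A6 : forall s t f, IsAxiom (FCond (FJ s f) (FJ (TSum s t) f))
| A7 : forall s t f, IsAxiom (FCond (FJ t f) (FJ (TSum s t) f))
| A9 : forall t f, IsAxiom (FCond (FJ t f) (FJ (TBang t) (FJ t f))).

Definition is_CS (CS : fm -> Prop) : Prop :=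
  forall f, CS f -> exists c g, f = FJ (TC c) g /\ IsAxiom g.

Inductive Derivable (CS : fm -> Prop) : fm -> Prop :=
| D_ax  : forall f, IsAxiom f -> Derivable CS f
| D_cs  : forall f, CS f -> Derivable CS f
| D_mp  : forall f g, Derivable CS f -> Derivable CS (FImp f g) -> Derivable CS g
| D_rcn : forall f g, Derivable CS g -> Derivable CS (FCond f g).

Fixpoint bigconj (f : fm) (l : list fm) : fm :=
  match l with
  | [] => f
  | g :: l' => FAnd f (bigconj g l')
  end.

Definition derives (CS : fm -> Prop) (T : fm -> Prop) (f : fm) : Prop :=
  Derivable CS f \/
  exists g l, T g /\ (forall h, In h l -> T h) /\ Derivable CS (FImp (bigconj g l) f).

(* Relational models. V w is a set of formulas; at a normal state only the
   letters FP p in V w matter (i.e. V(w) ⊆ Prop). *)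
Record rmodel : Type := {
  W   : Type;
  WN  : W -> Prop;
  RF  : fm -> W -> W -> Prop;
  RT  : tm -> W -> W -> Prop;
  V   : W -> fm -> Prop;
  WN_nonempty : exists w, WN w;
  RF_normal : forall f w v, RF f w v -> WN w /\ WN v
}.

Fixpoint sat (M : rmodel) (w : W M) (f : fm) : Prop :=
  (WN M w ->
     match f with
     | FP p => V M w (FP p)
     | FNeg g => ~ sat M w g
     | FAnd g h => sat M w g /\ sat M w h
     | FImp g h => sat M w g -> sat M w h
     | FCond g h => forall v, RF M g w v -> sat M v h
     | FJ t g => forall v, RT M t w v -> sat M v g
     end)
  /\ (~ WN M w -> V M w f).

Definition is_model (CS : fm -> Prop) (M : rmodel) : Prop :=
  forall w, WN M w ->
    (forall f v, RF M f w v -> sat M v f) /\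
    (forall f, sat M w f -> RF M f w w) /\
    (forall c f v, CS (FJ (TC c) f) -> RT M (TC c) w v -> sat M v f) /\
    (forall s t v, RT M (TSum s t) w v -> RT M s w v /\ RT M t w v) /\
    (forall s t v f g, RT M (TApp s t) w v ->
        sat M w (FAnd (FJ s (FCond f g)) (FJ t f)) -> sat M v g) /\
    (forall t v u, RT M (TBang t) w v -> RT M t v u -> RT M t w u).

Definition entails (CS : fm -> Prop) (T : fm -> Prop) (f : fm) : Prop :=
  forall M : rmodel, is_model CS M ->
    forall w : W M, WN M w -> (forall g, T g -> sat M w g) -> sat M w f.

From Stdlib Require Import List Bool Classical Cantor PeanoNat.
Import ListNotations.

(* Normal worlds are maximal consistent sets, and
   G R_phi D holds when phi is in D and D contains every psi with phi > psi in G.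
   The set {psi | phi > psi in G} is closed under derivable consequence (RCN and
   A2), so if phi > psi is not in G then, by A3, that set together with phi and
   ~psi is consistent; Lindenbaum extends it to the R_phi-successor refuting psi.
   Justification successors are non-normal: from G, R_t reaches a state whose
   valuation is {psi | t:psi in G}. Non-normal states satisfy exactly their
   valuation, so t:psi is true at G iff it is in G, conditions (3)-(5) reduce to
   A5-A7 and CS being in G, and (7) is vacuous since R_t never starts at a
   non-normal state. *)

Definition impl (l : list fm) (g : fm) : fm := fold_right FImp g l.
Definition bot : fm := FAnd (FP 0) (FNeg (FP 0)).

Lemma beval_impl v l g :
  beval v (impl l g) = implb (forallb (beval v) l) (beval v g).
Proof.
  induction l as [|a l IH]; simpl; [reflexivity|].
  rewrite IH. destruct (beval v a), (forallb (beval v) l), (beval v g); reflexivity.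
Qed.

Lemma beval_bigconj v f l : beval v (bigconj f l) = forallb (beval v) (f :: l).
Proof.
  revert f; induction l as [|g l IH]; intro f; simpl.
  - rewrite andb_true_r; reflexivity.
  - rewrite IH; reflexivity.
Qed.

Ltac bool_taut :=
  let v := fresh "v" in
  intro v; unfold bot; simpl; rewrite ?beval_impl, ?beval_bigconj; simpl;
  repeat match goal with
  | |- context [beval v ?f] => destruct (beval v f)
  | |- context [forallb (beval v) ?l] => destruct (forallb (beval v) l)
  | |- context [v ?f] => destruct (v f)
  end; reflexivity.

Fixpoint tcode (t : tm) : nat :=
  match t with
  | TC n => to_nat (0, n)
  | TV n => to_nat (1, n)
  | TApp s u => to_nat (2, to_nat (tcode s, tcode u))
  | TSum s u => to_nat (3, to_nat (tcode s, tcode u))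
  | TBang s => to_nat (4, tcode s)
  end.

Fixpoint fcode (f : fm) : nat :=
  match f with
  | FP n => to_nat (0, n)
  | FNeg g => to_nat (1, fcode g)
  | FAnd g h => to_nat (2, to_nat (fcode g, fcode h))
  | FImp g h => to_nat (3, to_nat (fcode g, fcode h))
  | FCond g h => to_nat (4, to_nat (fcode g, fcode h))
  | FJ t g => to_nat (5, to_nat (tcode t, fcode g))
  end.

Lemma to_nat_inj p q : to_nat p = to_nat q -> p = q.
Proof. intro H. rewrite <- (cancel_of_to p), <- (cancel_of_to q), H. reflexivity. Qed.

Section Injectivity.
(* Otherwise [injection] computes the inner codes and the equations become unusable. *)
Opaque to_nat.

Ltac to_nat_inversion :=
  repeat match goal with
  | H : to_nat _ = to_nat _ |- _ => apply to_nat_inj in H; injection H; clear H; intros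
  end.

Lemma tcode_inj s t : tcode s = tcode t -> s = t.
Proof.
  revert t; induction s; destruct t; cbn [tcode]; intro H; to_nat_inversion;
    try discriminate; subst; f_equal; auto.
Qed.

Lemma fcode_inj f g : fcode f = fcode g -> f = g.
Proof.
  revert g; induction f; destruct g; cbn [fcode]; intro H; to_nat_inversion;
    try discriminate; subst; f_equal; auto using tcode_inj.
Qed.

End Injectivity.

Section Derivations.
Variable CS : fm -> Prop.

Lemma Derivable_taut_mp f g :
  Derivable CS f -> tautology (FImp f g) -> Derivable CS g.
Proof. intros Df Ht. exact (D_mp _ f _ Df (D_ax _ _ (A1 _ Ht))). Qed.

Lemma Derivable_impl_incl l l' g :
  incl l l' -> Derivable CS (impl l g) -> Derivable CS (impl l' g).
Proof.
  intros Hl D. apply (Derivable_taut_mp _ _ D). intro v. simpl.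
  rewrite !beval_impl. apply implb_true_iff. rewrite !implb_true_iff.
  intros Himp Hl'. apply Himp. rewrite forallb_forall in *. auto.
Qed.

Definition derivable_from (G : fm -> Prop) (g : fm) : Prop :=
  exists l, Forall G l /\ Derivable CS (impl l g).

Definition extend (G : fm -> Prop) (f : fm) : fm -> Prop := fun h => G h \/ h = f.

Lemma derivable_from_Derivable G g : Derivable CS g -> derivable_from G g.
Proof. intro D. exists []. split; [constructor | exact D]. Qed.

Lemma derivable_from_mono (G G' : fm -> Prop) g :
  (forall h, G h -> G' h) -> derivable_from G g -> derivable_from G' g.
Proof.
  intros HG [l [Hl D]]. exists l. split; [|exact D].
  eapply Forall_impl; eassumption.
Qed.

Lemma derivable_from_list G l g :
  Forall (derivable_from G) l -> Derivable CS (impl l g) -> derivable_from G g.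
Proof.
  revert g; induction l as [|a l IH]; intros g Hl D.
  - exact (derivable_from_Derivable G g D).
  - inversion_clear Hl as [|? ? [la [Hla Da]] Hl'].
    assert (Dag : Derivable CS (impl l (FImp a g))).
    { apply (Derivable_taut_mp _ _ D). bool_taut. }
    destruct (IH (FImp a g) Hl' Dag) as [lb [Hlb Db]].
    exists (la ++ lb). split; [apply Forall_app; split; assumption|].
    apply (D_mp _ (impl (la ++ lb) a)).
    + apply (Derivable_impl_incl la); [apply incl_appl, incl_refl | exact Da].
    + apply (D_mp _ (impl (la ++ lb) (FImp a g))).
      * apply (Derivable_impl_incl lb); [apply incl_appr, incl_refl | exact Db].
      * apply D_ax, A1. bool_taut.
Qed.

Lemma derivable_from_taut G l g :
  tautology (impl l g) -> Forall (derivable_from G) l -> derivable_from G g.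
Proof. intros Ht Hl. exact (derivable_from_list G l g Hl (D_ax _ _ (A1 _ Ht))). Qed.

Lemma derivable_from_in G g : G g -> derivable_from G g.
Proof. intro Hg. exists [g]. split; [auto | apply D_ax, A1; bool_taut]. Qed.

Lemma Forall_extend G f l :
  Forall (extend G f) l -> exists l', Forall G l' /\ incl l (f :: l').
Proof.
  induction 1 as [|a l [Ga | ->] _ [l' [Hl' Hincl]]].
  - exists []. split; [constructor | intros ? []].
  - exists (a :: l'). split; [constructor; assumption|].
    intros h [<- | Hh]; simpl; [auto|]. destruct (Hincl h Hh) as [<- | ?]; auto.
  - exists l'. split; [assumption|]. intros h [<- | Hh]; [left; reflexivity | exact (Hincl h Hh)].
Qed.

Lemma deduction G f g :
  derivable_from (extend G f) g -> derivable_from G (FImp f g).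
Proof.
  intros [l [Hl D]]. destruct (Forall_extend G f l Hl) as [l' [Hl' Hincl]].
  exists l'. split; [assumption|].
  apply (Derivable_taut_mp _ _ (Derivable_impl_incl _ _ _ Hincl D)). bool_taut.
Qed.

Definition consistent (G : fm -> Prop) : Prop := ~ derivable_from G bot.

Definition mcs (G : fm -> Prop) : Prop := consistent G /\ forall f, G f \/ G (FNeg f).

Lemma consistent_extend_neg G f :
  ~ derivable_from G f -> consistent (extend G (FNeg f)).
Proof.
  intros Hf Hbot. apply Hf, (derivable_from_taut G [FImp (FNeg f) bot]).
  - bool_taut.
  - constructor; [apply deduction, Hbot | constructor].
Qed.

Section MaximalConsistent.
Variable G : fm -> Prop.
Hypothesis HG : mcs G.

Lemma mcs_derivable_from g : derivable_from G g -> G g.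
Proof.
  intro Hg. destruct (proj2 HG g) as [|Hng]; [assumption|]. exfalso.
  apply (proj1 HG), (derivable_from_taut G [g; FNeg g]); [bool_taut|].
  repeat constructor; [exact Hg | apply derivable_from_in, Hng].
Qed.

Lemma mcs_taut l g : tautology (impl l g) -> Forall G l -> G g.
Proof.
  intros Ht Hl. apply mcs_derivable_from, (derivable_from_taut G l g Ht).
  eapply Forall_impl; [apply derivable_from_in | exact Hl].
Qed.

Lemma mcs_Derivable g : Derivable CS g -> G g.
Proof. intro D. apply mcs_derivable_from, derivable_from_Derivable, D. Qed.

Lemma mcs_mp f g : G (FImp f g) -> G f -> G g.
Proof. intros Hfg Hf. apply (mcs_taut [FImp f g; f]); [bool_taut | auto]. Qed.

Lemma mcs_neg f : G (FNeg f) <-> ~ G f.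
Proof.
  split.
  - intros Hnf Hf. apply (proj1 HG), derivable_from_in.
    apply (mcs_taut [f; FNeg f]); [bool_taut | auto].
  - intro Hf. destruct (proj2 HG f); tauto.
Qed.

Lemma mcs_and f g : G (FAnd f g) <-> G f /\ G g.
Proof.
  split.
  - intro H. split; apply (mcs_taut [FAnd f g]); auto; bool_taut.
  - intros [Hf Hg]. apply (mcs_taut [f; g]); [bool_taut | auto].
Qed.

Lemma mcs_imp f g : G (FImp f g) <-> (G f -> G g).
Proof.
  split; [intros; apply (mcs_mp f); assumption|].
  intro H. destruct (proj2 HG f) as [Hf | Hnf].
  - apply (mcs_taut [g]); [bool_taut | auto].
  - apply (mcs_taut [FNeg f]); [bool_taut | auto].
Qed.

Lemma mcs_cond_mp f g : G (FCond f g) -> G f -> G g.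
Proof. intro H. apply mcs_mp, (mcs_mp _ _ (mcs_Derivable _ (D_ax _ _ (A4 f g))) H). Qed.

Lemma mcs_cond_closed f l g :
  Derivable CS (impl l g) -> Forall (fun p => G (FCond f p)) l -> G (FCond f g).
Proof.
  revert g; induction l as [|a l IH]; intros g D Hl.
  - apply mcs_Derivable, D_rcn, D.
  - inversion_clear Hl as [|? ? Ha Hl'].
    assert (Dag : Derivable CS (impl l (FImp a g)))
      by (apply (Derivable_taut_mp _ _ D); bool_taut).
    pose proof (mcs_Derivable _ (D_ax _ _ (A2 f a g))) as A2fag.
    exact (mcs_mp _ _ (mcs_mp _ _ A2fag (IH _ Dag Hl')) Ha).
Qed.

End MaximalConsistent.

Section Lindenbaum.
Variable G0 : fm -> Prop.
Hypothesis HG0 : consistent G0.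

Fixpoint stage (n : nat) : fm -> Prop :=
  match n with
  | 0 => G0
  | S n => fun g => stage n g \/ (fcode g = n /\ consistent (extend (stage n) g))
  end.

Definition limit (g : fm) : Prop := exists n, stage n g.

Lemma stage_mono m n : m <= n -> forall g, stage m g -> stage n g.
Proof. induction 1; simpl; auto. Qed.

Lemma stage_consistent n : consistent (stage n).
Proof.
  induction n as [|n IH]; [exact HG0|]. simpl.
  destruct (classic (exists g, fcode g = n /\ consistent (extend (stage n) g)))
    as [[g [Hg Hcons]] | Hnone]; intro Hbot.
  - apply Hcons. revert Hbot. apply derivable_from_mono.
    intros h [Hh | [Hh _]]; [left; exact Hh | right; apply fcode_inj; congruence].
  - apply IH. revert Hbot. apply derivable_from_mono.
    intros h [Hh | [Hh Hcons]]; [exact Hh | exfalso; eauto].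
Qed.

Lemma limit_list l : Forall limit l -> exists n, Forall (stage n) l.
Proof.
  induction 1 as [|a l [m Ha] _ [n Hl]]; [exists 0; constructor|].
  exists (Nat.max m n). constructor.
  - apply (stage_mono m); [apply Nat.le_max_l | exact Ha].
  - eapply Forall_impl; [|exact Hl]. apply stage_mono, Nat.le_max_r.
Qed.

Lemma limit_consistent : consistent limit.
Proof.
  intros [l [Hl D]]. destruct (limit_list l Hl) as [n Hn].
  exact (stage_consistent n (ex_intro _ l (conj Hn D))).
Qed.

Lemma limit_decides g : limit g \/ derivable_from limit (FNeg g).
Proof.
  destruct (classic (consistent (extend (stage (fcode g)) g))) as [Hcons | Hincons].
  - left. exists (S (fcode g)). right. split; [reflexivity | exact Hcons].
  - right. apply NNPP, deduction in Hincons.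
    apply (derivable_from_mono (stage (fcode g))); [intros h Hh; exists (fcode g); exact Hh|].
    apply (derivable_from_taut _ [FImp g bot]);
      [bool_taut | repeat constructor; exact Hincons].
Qed.

Lemma lindenbaum : exists G, mcs G /\ forall g, G0 g -> G g.
Proof.
  exists limit. split; [split|].
  - exact limit_consistent.
  - intro f. destruct (limit_decides f) as [|Hnf]; [left; assumption|].
    destruct (limit_decides (FNeg f)) as [|Hnnf]; [right; assumption|].
    exfalso. apply limit_consistent.
    apply (derivable_from_taut _ [FNeg f; FNeg (FNeg f)]);
      [bool_taut | repeat constructor; assumption].
  - intros g Hg. exists 0. exact Hg.
Qed.

End Lindenbaum.

Lemma mcs_cond_witness G f g :
  mcs G -> ~ G (FCond f g) ->
  exists D, mcs D /\ D f /\ ~ D g /\ forall p, G (FCond f p) -> D p.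
Proof.
  intros HG Hfg.
  set (Cf := fun p => G (FCond f p)).
  assert (Hcons : consistent (extend (extend Cf f) (FNeg g))).
  { intro Hbot. apply Hfg.
    apply deduction, deduction in Hbot.
    assert (Himp : derivable_from Cf (FImp f g)).
    { apply (derivable_from_taut _ [FImp f (FImp (FNeg g) bot)]);
        [bool_taut | repeat constructor; exact Hbot]. }
    destruct Himp as [l [Hl D]].
    pose proof (mcs_cond_closed G HG f l _ D Hl) as Hffg.
    pose proof (mcs_Derivable G HG _ (D_ax _ _ (A2 f f g))) as A2ffg.
    pose proof (mcs_Derivable G HG _ (D_ax _ _ (A3 f))) as A3f.
    exact (mcs_mp G HG _ _ (mcs_mp G HG _ _ A2ffg Hffg) A3f). }
  destruct (lindenbaum _ Hcons) as [D [HD Sub]].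
  exists D. split; [exact HD|]. split; [|split].
  - apply Sub. left. right. reflexivity.
  - apply (mcs_neg D HD), Sub. right. reflexivity.
  - intros p Hp. apply Sub. left. left. exact Hp.
Qed.

End Derivations.

Lemma sat_nonnormal M w f : ~ WN M w -> (sat M w f <-> V M w f).
Proof. intro Hw. destruct f; simpl; tauto. Qed.

Lemma guarded_iff (N P Q : Prop) : N -> ((N -> P) /\ (~ N -> Q) <-> P).
Proof. tauto. Qed.

Section CanonicalModel.
Variable CS : fm -> Prop.
Hypothesis mcs_exists : exists G, mcs CS G.

Definition cworld : Type := bool * (fm -> Prop).

Definition cnormal (w : cworld) : Prop := fst w = true /\ mcs CS (snd w).

Definition cRF (f : fm) (w v : cworld) : Prop :=
  cnormal w /\ cnormal v /\ snd v f /\ forall p, snd w (FCond f p) -> snd v p.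

Definition cRT (t : tm) (w v : cworld) : Prop :=
  cnormal w /\ fst v = false /\ forall p, snd w (FJ t p) -> snd v p.

Lemma cnormal_exists : exists w, cnormal w.
Proof. destruct mcs_exists as [G HG]. exists (true, G). split; [reflexivity | exact HG]. Qed.

Lemma cRF_normal f w v : cRF f w v -> cnormal w /\ cnormal v.
Proof. intros [Hw [Hv _]]. split; assumption. Qed.

Definition canonical_model : rmodel :=
  {| W := cworld; WN := cnormal; RF := cRF; RT := cRT; V := snd;
     WN_nonempty := cnormal_exists; RF_normal := cRF_normal |}.

Lemma sat_canonical_nonnormal (w : cworld) f :
  fst w = false -> (sat canonical_model w f <-> snd w f).
Proof. intro Hw. apply sat_nonnormal. intros [H _]. congruence. Qed.

Lemma truth_lemma f : forall G, mcs CS G -> (sat canonical_model (true, G) f <-> G f).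
Proof.
  induction f as [p | f IH | f IHf g IHg | f IHf g IHg | f IHf g IHg | t f IH];
    intros G HG; assert (Hw : cnormal (true, G)) by (split; [reflexivity | exact HG]);
    simpl; rewrite (guarded_iff _ _ _ Hw).
  - reflexivity.
  - rewrite IH, mcs_neg by exact HG. reflexivity.
  - rewrite IHf, IHg, mcs_and by exact HG. reflexivity.
  - rewrite IHf, IHg, mcs_imp by exact HG. reflexivity.
  - split.
    + intro Hsucc. apply NNPP. intro Hfg.
      destruct (mcs_cond_witness CS G f g HG Hfg) as [D [HD [Df [Dg Hsub]]]].
      apply Dg, (IHg D HD), Hsucc. exact (conj Hw (conj (conj eq_refl HD) (conj Df Hsub))).
    + intros Hfg [b D] [_ [[Hb HD] [_ Hsub]]]. simpl in Hb; subst b.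
      apply (IHg D HD), Hsub, Hfg.
  - split.
    + intro Hsucc. apply (sat_canonical_nonnormal (false, fun p => G (FJ t p))); [reflexivity|].
      apply Hsucc. exact (conj Hw (conj eq_refl (fun p Hp => Hp))).
    + intros Htf v [_ [Hv Hsub]]. apply sat_canonical_nonnormal, Hsub, Htf. exact Hv.
Qed.

Lemma canonical_is_model : is_model CS canonical_model.
Proof.
  intros [b G] [Hb HG]. simpl in Hb; subst b.
  assert (Hax : forall f, IsAxiom f -> G f)
    by (intros f Hf; apply (mcs_Derivable CS G HG), D_ax, Hf).
  split; [|split; [|split; [|split; [|split]]]].
  - intros f [b D] [_ [[Hb HD] [Df _]]]. simpl in Hb; subst b.
    apply (truth_lemma f D HD), Df.
  - intros f Hf. apply (truth_lemma f G HG) in Hf.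
    split; [|split; [|split]]; try (split; [reflexivity | exact HG]); [exact Hf|].
    intros p Hp. exact (mcs_cond_mp CS G HG f p Hp Hf).
  - intros c f v Hc [_ [Hv Hsub]]. apply sat_canonical_nonnormal; [exact Hv|].
    apply Hsub, (mcs_Derivable CS G HG), D_cs, Hc.
  - intros s t v [Hw [Hv Hsub]].
    split; split; try exact Hw; split; try exact Hv; intros p Hp; apply Hsub.
    + exact (mcs_cond_mp CS G HG _ _ (Hax _ (A6 s t p)) Hp).
    + exact (mcs_cond_mp CS G HG _ _ (Hax _ (A7 s t p)) Hp).
  - intros s t v f g [_ [Hv Hsub]] Hst. apply sat_canonical_nonnormal; [exact Hv|].
    apply (truth_lemma _ G HG) in Hst.
    apply Hsub, (mcs_cond_mp CS G HG _ _ (Hax _ (A5 s t f g)) Hst).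
  - intros t v u [_ [Hv _]] [[Hv' _] _]. congruence.
Qed.

End CanonicalModel.

Lemma derives_of_derivable_from CS T f : derivable_from CS T f -> derives CS T f.
Proof.
  intros [[|g l] [Hl D]].
  - left. exact D.
  - right. apply Forall_cons_iff in Hl as [Hg Hl]. exists g, l.
    split; [exact Hg|]. split; [apply Forall_forall, Hl|].
    apply (Derivable_taut_mp CS _ _ D). bool_taut.
Qed.

Theorem mainTheorem14 (CS : fm -> Prop) (HCS : is_CS CS)
  (T : fm -> Prop) (phi : fm) :
  entails CS T phi -> derives CS T phi.
Proof.
  intro Hent. apply derives_of_derivable_from, NNPP. intro Hphi.
  destruct (lindenbaum CS _ (consistent_extend_neg CS T phi Hphi)) as [G [HG Sub]].
  set (M := canonical_model CS (ex_intro _ G HG)).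
  assert (Hsat : sat M (true, G) phi).
  { apply Hent; [apply canonical_is_model | split; [reflexivity | exact HG] |].
    intros g Hg. apply truth_lemma; [exact HG | apply Sub; left; exact Hg]. }
  apply truth_lemma in Hsat; [|exact HG].
  apply (mcs_neg CS G HG phi); [apply Sub; right; reflexivity | exact Hsat].
Qed.
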